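(* Every locally Menger Hausdorff $P$-space can be densely embedded in a Menger Hausdorff $P$-space.
   Context: A space $X$ is Menger if for each sequence $(\mathcal{U}_n)$ of open covers of $X$ there is a sequence $(\mathcal{V}_n)$ with each $\mathcal{V}_n$ a finite subset of $\mathcal{U}_n$ and $\bigcup_{n}\bigcup\mathcal{V}_n=X$. A space $X$ is locally Menger if for each $x\in X$ there exist an open set $U$ and a Menger subspace $Y$ of $X$ with $x\in U\subseteq Y$. A $P$-space is a space in which every countable intersection of open sets is open. *)

From mathcomp Require Import all_boot all_order all_algebra.
From mathcomp Require Import all_classical all_reals all_analysis.
Set Implicit Arguments. Unset Strict Implicit. Unset Printing Implicit Defensive.
Local Open Scope classical_set_scope.

(* A subspace Y of X is Menger: for every sequence (U_n) of covers of Y by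
   open sets of X (equivalently, by traces of such, i.e. open covers of the
   subspace Y), there are finite V_n ⊆ U_n with ⋃_n ⋃ V_n ⊇ Y. *)
Definition menger_set (X : topologicalType) (Y : set X) : Prop :=
  forall U : nat -> set (set X),
    (forall n, forall W, U n W -> open W) ->
    (forall n, Y `<=` \bigcup_(W in U n) W) ->
    exists V : nat -> set (set X),
      (forall n, finite_set (V n) /\ V n `<=` U n) /\
      Y `<=` \bigcup_n \bigcup_(W in V n) W.

Definition menger_space (X : topologicalType) : Prop := menger_set [set: X].

Definition locally_menger (X : topologicalType) : Prop :=
  forall x : X, exists (U Y : set X), open U /\ menger_set Y /\ U x /\ U `<=` Y.

Definition P_space (X : topologicalType) : Prop :=
  forall U : nat -> set X, (forall n, open (U n)) -> open (\bigcap_n U n).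

Definition embedding (X Y : topologicalType) (f : X -> Y) : Prop :=
  injective f /\ continuous f /\
  forall U : set X, open U -> exists W : set Y, open W /\ f @` U = W `&` range f.

Definition dense_embedding (X Y : topologicalType) (f : X -> Y) : Prop :=
  embedding f /\ dense (range f).

(* Adjoin to X a point [None] whose neighbourhoods are the complements of
   closed Menger subsets of X.  The extension is Menger, since one member of
   any open cover contains [None] and misses only a Menger set.  It is a
   P-space because countable unions of Menger sets are Menger.  In a Hausdorff
   P-space Menger sets are closed: a point x outside a Menger set M can be
   separated by an open set from each finite subfamily of the cover of M by
   open sets whose closure misses x, and the countable intersection of these
   open sets is still open.  So a closed Menger neighbourhood of a point of X
   separates it from [None], and the extension is Hausdorff.  X is dense in
   it unless X is itself Menger, in which case X itself will do. *)
From HB Require Import structures.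
From mathcomp Require Import all_boot all_order all_algebra.
From mathcomp Require Import all_classical all_reals all_analysis.

Set Implicit Arguments.
Unset Strict Implicit.
Unset Printing Implicit Defensive.

Local Open Scope classical_set_scope.

Lemma preimage_image_inj (T U : Type) (f : T -> U) (A : set T) :
  injective f -> f @^-1` (f @` A) = A.
Proof.
by move=> inj_f; apply/seteqP; split=> [x [y Ay /inj_f <-]|x Ax] //; exists x.
Qed.

Lemma finite_subset_image (T : Type) (U : eqType) (g : T -> U)
    (A : set T) (B : set U) :
  finite_set B -> B `<=` g @` A ->
  exists C : set T, [/\ finite_set C, C `<=` A & B `<=` g @` C].
Proof.
move=> /finite_seqP [s ->]; elim: s => [|b s IHs] sAB.
  by exists set0; split=> // y; rewrite /= in_nil.
have [a Aa gab] := sAB b (mem_head _ _).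
have [|C [finC CA sC]] := IHs.
  by move=> y sy; apply: sAB; rewrite /= in_cons sy orbT.
exists (a |` C); split; first by rewrite finite_setU; split.
- by move=> x [->|/CA].
- move=> y /=; rewrite in_cons => /orP [/eqP ->|/sC [x Cx <-]].
    by exists a => //; left.
  by exists x => //; right.
Qed.

Section Menger.
Context {X : topologicalType}.

Lemma menger_set0 : menger_set (set0 : set X).
Proof. by move=> U _ _; exists (fun=> set0); split=> // n; split. Qed.

Lemma menger_bigcup (M : nat -> set X) :
  (forall k, menger_set (M k)) -> menger_set (\bigcup_k M k).
Proof.
move=> mM U oU covU.
have /choice [V HV] : forall k, exists Vk : nat -> set (set X),
    (forall n, finite_set (Vk n) /\ Vk n `<=` U (pickle (k, n))) /\
    M k `<=` \bigcup_n \bigcup_(W in Vk n) W.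
  move=> k; apply: (mM k (fun n => U (pickle (k, n)))) => [n|n x Mx].
    exact: oU.
  by apply: covU; exists k.
exists (fun m => if pickle_inv m is Some (k, n) then V k n else set0); split.
  move=> m; case E : (pickle_inv m) => [[k n]|]; last by split; [exact: finite_set0|].
  by rewrite -(@pickle_invK (nat * nat)%type m) E /=; exact: (HV k).1.
move=> x [k _ /(HV k).2 [n _ [W VW Wx]]].
by exists (pickle (k, n)) => //; rewrite pickleK_inv; exists W.
Qed.

Lemma menger_setU (A B : set X) :
  menger_set A -> menger_set B -> menger_set (A `|` B).
Proof.
move=> mA mB; have -> : A `|` B = \bigcup_k (if k is 0 then A else B).
  by apply/seteqP; split=> [x [Ax|Bx]|x [[|k] _]]; [exists 0|exists 1|left|right].
by apply: menger_bigcup => -[].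
Qed.

Lemma menger_set_image (Y : topologicalType) (f : X -> Y) (K : set X) :
  continuous f -> menger_set K -> menger_set (f @` K).
Proof.
move=> /continuousP cf mK U oU covU.
pose U' n := [set f @^-1` W | W in U n].
have [V' [HV' covV']] : exists V' : nat -> set (set X),
    (forall n, finite_set (V' n) /\ V' n `<=` U' n) /\
    K `<=` \bigcup_n \bigcup_(T in V' n) T.
  apply: mK => [n _ [W UW <-]|n x Kx]; first exact/cf/(oU n).
  have [W UW Wfx] := covU n (f x) (ex_intro2 _ _ x Kx erefl).
  by exists (f @^-1` W) => //; exists W.
have /choice [V HV] : forall n, exists Vn : set (set Y),
    [/\ finite_set Vn, Vn `<=` U n & V' n `<=` preimage f @` Vn].
  by move=> n; have [finV' sV'] := HV' n; exact: finite_subset_image.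
exists V; split=> [n|_ [x Kx <-]]; first by have [] := HV n.
have [n _ [T V'T Tx]] := covV' x Kx.
have [_ _ /(_ T V'T) [W VW WT]] := HV n.
by exists n => //; exists W; rewrite // -WT in Tx.
Qed.

Lemma finite_disjoint_open (x : X) (F : set (set X)) :
  finite_set F ->
  (forall B, F B -> exists A, [/\ open A, A x & A `&` B = set0]) ->
  exists A, [/\ open A, A x & forall B, F B -> A `&` B = set0].
Proof.
move=> /finite_seqP [s ->]; elim: s => [|B s IHs] sepF.
  by exists setT; split=> [|//|B]; [exact: openT|rewrite /= in_nil].
have [A1 [oA1 A1x A1B]] := sepF B (mem_head _ _).
have [|A2 [oA2 A2x A2s]] := IHs.
  by move=> C sC; apply: sepF; rewrite /= in_cons sC orbT.
exists (A1 `&` A2); split=> [|//|C /=]; first exact: openI.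
rewrite in_cons => /orP [/eqP ->|sC].
  by rewrite setIAC A1B set0I.
by rewrite -setIA A2s // setI0.
Qed.

Lemma menger_closed (M : set X) :
  hausdorff_space X -> P_space X -> menger_set M -> closed M.
Proof.
move=> hX hP mM x clMx; apply: contrapT => Mx.
pose U (_ : nat) := [set B : set X |
  open B /\ exists A, [/\ open A, A x & A `&` B = set0]].
have [V [HV covV]] : exists V : nat -> set (set X),
    (forall n, finite_set (V n) /\ V n `<=` U n) /\
    M `<=` \bigcup_n \bigcup_(W in V n) W.
  apply: (mM U) => [n W [] //|n y My].
  have xy : x != y by apply: contra_notN Mx => /eqP ->.
  move: hX; rewrite open_hausdorff => /(_ x y xy) [[A B] /=].
  move=> [/set_mem Ax /set_mem By] [oA oB /eqP AB].
  by exists B => //; split=> //; exists A.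
have /choice [A HA] : forall n, exists An,
    [/\ open An, An x & forall B, V n B -> An `&` B = set0].
  move=> n; have [finV sVU] := HV n.
  by apply: finite_disjoint_open => // B /sVU [].
have [y [My Ay]] : M `&` \bigcap_n A n !=set0.
  apply: clMx; apply: open_nbhs_nbhs; split; last by move=> n _; have [] := HA n.
  by apply: hP => n; have [] := HA n.
have [n _ [W VW Wy]] := covV y My.
have [_ _ /(_ W VW) AW] := HA n.
suff : (A n `&` W) y by rewrite AW.
by split=> //; exact: Ay.
Qed.

End Menger.

Definition menger_extension (X : topologicalType) : Type := option X.

Section MengerExtension.
Context {X : topologicalType}.
Local Notation Y := (menger_extension X).

HB.instance Definition _ := Choice.on Y.

Definition menger_extension_open (O : set Y) : Prop :=
  open (Some @^-1` O) /\
  (O None -> exists K : set X,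
    [/\ closed K, menger_set K & ~` K `<=` Some @^-1` O]).

Lemma menger_extension_openT : menger_extension_open setT.
Proof.
split=> [|_]; first exact: openT.
by exists set0; split=> //; [exact: closed0|exact: menger_set0].
Qed.

Lemma menger_extension_openI : setI_closed menger_extension_open.
Proof.
move=> A B [oA NA] [oB NB]; split=> [|[/NA [KA [cA mA sA]] /NB [KB [cB mB sB]]]].
  exact: openI.
exists (KA `|` KB); split; [exact: closedU|exact: menger_setU|].
by move=> x /= /not_orP [/sA ? /sB ?].
Qed.

Lemma menger_extension_open_bigcup (I : Type) (f : I -> set Y) :
  (forall i, menger_extension_open (f i)) ->
  menger_extension_open (\bigcup_i f i).
Proof.
move=> open_f; split=> [|[i _ fiN]].
  by apply: bigcup_open => i _; have [] := open_f i.
have [_ /(_ fiN) [K [cK mK sK]]] := open_f i.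
by exists K; split=> // x /sK fiSx; exists i.
Qed.

HB.instance Definition _ := isOpenTopological.Build Y
  menger_extension_openT menger_extension_openI menger_extension_open_bigcup.

Lemma some_continuous : continuous (Some : X -> Y).
Proof. by apply/continuousP => A []. Qed.

Lemma open_some_image (A : set X) : open A -> open (Some @` A : set Y).
Proof.
move=> oA; split=> [|[]//].
by rewrite preimage_image_inj // => a b [].
Qed.

Lemma embedding_some : embedding (Some : X -> Y).
Proof.
split=> [a b []//|]; split=> [|A oA]; first exact: some_continuous.
exists (Some @` A); split; first exact: open_some_image.
by apply/seteqP; split=> [_ [a Aa <-]|_ [[a Aa <-] _]]; [split; exists a|exists a].
Qed.

Lemma menger_extension_menger : menger_space Y.
Proof.
move=> U oU covU; have [W0 U0W0 W0N] := covU 0 None I.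
have [_ /(_ W0N) [K [_ mK sK]]] := oU 0 W0 U0W0.
have [V [HV covV]] :=
  menger_set_image some_continuous mK oU (fun n y _ => covU n y I).
exists (fun n => if n is 0 then W0 |` V 0 else V n); split.
  move=> n; have [finV sVU] := HV n; case: n finV sVU => [|n] finV sVU //.
  by split=> [|W [->|/sVU]] //; rewrite finite_setU; split.
case=> [x|] _; last by exists 0 => //; exists W0 => //; left.
have [Kx|nKx] := pselect (K x); last by exists 0 => //; exists W0; [left|exact: sK].
have [n _ [W VW Wx]] := covV (Some x) (ex_intro2 _ _ x Kx erefl).
by exists n => //; exists W => //; case: n VW => [|n] VW; [right|].
Qed.

Lemma dense_range_some : ~ menger_space X -> dense (range (Some : X -> Y)).
Proof.
move=> nmX O [[x|] Ox] oO; first by exists (Some x); split=> //; exists x.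
have [_ /(_ Ox) [K [_ mK sK]]] := oO.
have [x Kx] : exists x, ~ K x.
  apply: contra_notP nmX => noK; rewrite /menger_space.
  suff -> : [set: X] = K by [].
  by apply/seteqP; split=> // x _; apply: contrapT => nKx; apply: noK; exists x.
by exists (Some x); split; [exact: sK|exists x].
Qed.

Lemma menger_extension_P_space : P_space X -> P_space Y.
Proof.
move=> hP U oU; split=> [|UN].
  by apply: (hP (fun n => Some @^-1` U n)) => n; have [] := oU n.
have /choice [K HK] : forall n, exists Kn : set X,
    [/\ closed Kn, menger_set Kn & ~` Kn `<=` Some @^-1` U n].
  by move=> n; have [_] := oU n; apply; exact: UN.
exists (\bigcup_n K n); split.
- rewrite -openC setC_bigcup; apply: hP => n.
  by apply: closed_openC; have [] := HK n.
- by apply: menger_bigcup => n; have [] := HK n.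
- move=> x nKx n _; have [_ _] := HK n; apply.
  by move=> Knx; apply: nKx; exists n.
Qed.

Lemma open_separation_none (x : X) :
  locally_menger X -> hausdorff_space X -> P_space X ->
  exists A B : set Y, [/\ open A, open B, A (Some x), B None & A `&` B = set0].
Proof.
move=> hL hX hP; have [U [M [oU [mM [Ux sUM]]]]] := hL x.
have cM := menger_closed hX hP mM.
have traceM : (Some : X -> Y) @^-1` (~` (Some @` M)) = ~` M.
  by rewrite -preimage_setC preimage_image_inj // => a b [].
exists (Some @` U), (~` (Some @` M)); split.
- exact: open_some_image.
- split=> [|_]; first by rewrite traceM; exact: closed_openC cM.
  by exists M; rewrite traceM; split.
- by exists x.
- by case.
- apply/seteqP; split=> // _ [[u Uu <-]]; apply; exists u => //; exact: sUM.
Qed.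

Lemma menger_extension_hausdorff :
  locally_menger X -> hausdorff_space X -> P_space X -> hausdorff_space Y.
Proof.
move=> hL hX hP; have sepN := open_separation_none _ hL hX hP.
rewrite open_hausdorff => -[x|] [y|] neq //.
- have xy : x != y by apply: contraNneq neq => ->.
  move: hX; rewrite open_hausdorff => /(_ x y xy) [[A B] /=].
  move=> [/set_mem Ax /set_mem By] [oA oB /eqP AB].
  exists (Some @` A, Some @` B); rewrite !inE /=; first by split; [exists x|exists y].
  split; [exact: open_some_image|exact: open_some_image|].
  apply/seteqP; split=> // _ [[a Aa <-] [b Bb [ba]]].
  suff : (A `&` B) a by rewrite AB.
  by split=> //; rewrite -ba.
- have [A [B [oA oB Ax BN AB]]] := sepN x.
  by exists (A, B); rewrite !inE.
- have [A [B [oA oB Ay BN AB]]] := sepN y.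
  by exists (B, A); rewrite !inE //; split; rewrite // setIC.
Qed.

End MengerExtension.

Lemma dense_embedding_id (X : topologicalType) : dense_embedding (@id X).
Proof.
split; last by move=> O [x Ox] _; exists x; split=> //; exists x.
split=> //; split=> [x|U oU]; first exact: cvg_id.
by exists U; split=> //; rewrite !image_id setIT.
Qed.

Theorem theorem3p8 (X : topologicalType) :
  locally_menger X -> hausdorff_space X -> P_space X ->
  exists (Y : topologicalType) (f : X -> Y),
    menger_space Y /\ hausdorff_space Y /\ P_space Y /\ dense_embedding f.
Proof.
move=> hL hX hP; have [mX|nmX] := pselect (menger_space X).
  by exists X, id; split=> //; split=> //; split=> //; exact: dense_embedding_id.
exists (menger_extension X), Some; split; first exact: menger_extension_menger.
split; first exact: menger_extension_hausdorff.
split; first exact: menger_extension_P_space.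
by split; [exact: embedding_some|exact: dense_range_some].
Qed.
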